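(* Every 2-local 1-automorphism of a finite dimensional formally real Jordan algebra $\mathcal{A}$ is an automorphism.
   Context: A real Jordan algebra is formally real if $\sum_i a_i^2=0$ (finite sum) implies each $a_i=0$; $\mathcal{A}$ is unital with identity $1$. A symmetry is $s\in\mathcal{A}$ with $s^2=1$, and $U_s(x)=2s(sx)-x$. A 2-local 1-automorphism is a map $\Delta:\mathcal{A}\to\mathcal{A}$ (not assumed linear) such that for every $x,y\in\mathcal{A}$ there is a symmetry $s$ with $\Delta(x)=U_s(x)$ and $\Delta(y)=U_s(y)$. *)

From HB Require Import structures.
From mathcomp Require Import all_boot all_order all_algebra.
From mathcomp Require Export reals.
Set Implicit Arguments. Unset Strict Implicit. Unset Printing Implicit Defensive.
Import GRing.Theory Num.Theory.
Local Open Scope ring_scope.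

Section Jordan.
Variables (R : realType) (V : vectType R).

Definition unital_jordan (mul : V -> V -> V) (one : V) : Prop :=
  [/\ forall (a : R) (x y z : V), mul x (a *: y + z) = a *: mul x y + mul x z,
      forall x y, mul x y = mul y x,
      forall x y, mul (mul x y) (mul x x) = mul x (mul y (mul x x))
    & forall x, mul one x = x].

Definition formally_real (mul : V -> V -> V) : Prop :=
  forall s : seq V, \sum_(a <- s) mul a a = 0 -> forall a, a \in s -> a = 0.

Definition symmetry (mul : V -> V -> V) (one s : V) : Prop := mul s s = one.

Definition Uop (mul : V -> V -> V) (s x : V) : V := (mul s (mul s x)) *+ 2 - x.

Definition two_local_1_automorphism (mul : V -> V -> V) (one : V)
    (D : V -> V) : Prop :=
  forall x y : V, exists s : V,
    [/\ symmetry mul one s, D x = Uop mul s x & D y = Uop mul s y].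

Definition jordan_automorphism (mul : V -> V -> V) (D : V -> V) : Prop :=
  [/\ forall (a : R) (x y : V), D (a *: x + y) = a *: D x + D y,
      bijective D
    & forall x y, D (mul x y) = mul (D x) (D y)].

End Jordan.

From HB Require Import structures.
From mathcomp Require Import all_boot all_order all_algebra.
From mathcomp Require Import reals complex ring.
From Stdlib Require Import Classical.
Set Implicit Arguments. Unset Strict Implicit. Unset Printing Implicit Defensive.
Import Order.TTheory GRing.Theory Num.Theory VectorInternalTheory.
Local Open Scope ring_scope.

(* The trace form (a, b) |-> tr L_(ab) of a finite dimensional formally real Jordan
   algebra is definite.  Indeed x^2 = sum_l l^2 c_l for nonzero idempotents c_l (the
   minimal polynomial of x has simple real roots, since a repeated or non-real factor
   would produce a nontrivial vanishing sum of squares), and for an idempotent c the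
   Peirce decomposition 2 L_c = 2 P_1(c) + P_1/2(c) into idempotent operators gives
   tr L_c > 0.  For a symmetry s, U_s is an involutive automorphism, so
   tr L_(U_s a) = tr (U_s L_a U_s) = tr L_a.  A 2-local 1-automorphism D agrees with a
   single U_s on a and b, hence preserves the trace form; an isometry of a definite
   form is linear and injective, so D is a linear bijection, and D(a^2) = (D a)^2
   polarizes to D(ab) = D a D b. *)

Section LinearFunction.
Variables (R : pzRingType) (U W : lmodType R) (f : U -> W).
Hypothesis f_lin : linear f.

Let fL : {linear U -> W} := HB.pack f (GRing.isLinear.Build R U W *:%R f f_lin).

Lemma lin0 : f 0 = 0. Proof. exact: (raddf0 fL). Qed.
Lemma linD : {morph f : u v / u + v}. Proof. exact: (raddfD fL). Qed.
Lemma linN : {morph f : u / - u}. Proof. exact: (raddfN fL). Qed.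
Lemma linB : {morph f : u v / u - v}. Proof. exact: (raddfB fL). Qed.
Lemma linMn n : {morph f : u / u *+ n}. Proof. exact: (raddfMn fL). Qed.
Lemma linZ a : {morph f : u / a *: u}. Proof. exact: (linearZZ fL). Qed.
Lemma lin_sum I r (P : pred I) (F : I -> U) :
  f (\sum_(i <- r | P i) F i) = \sum_(i <- r | P i) f (F i).
Proof. exact: (raddf_sum fL). Qed.

End LinearFunction.

(* In the trivial extension R ⋉ V, with (a, u)(b, v) = (ab, av + bu), V is an ideal
   and scaling by a is multiplication by (a, 0); [lmod_ring] transports an identity
   of an lmodType there and decides it with [ring]. *)
Section TrivialExtension.
Variables (R : comNzRingType) (V : lmodType R).

Definition trivext := (R * V)%type.
HB.instance Definition _ := GRing.Zmodule.on trivext.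

Definition trivext_mul (p q : trivext) : trivext :=
  (p.1 * q.1, p.1 *: q.2 + q.1 *: p.2).
Definition trivext_one : trivext := (1, 0).

Lemma trivext_mulA : associative trivext_mul.
Proof.
move=> [a u] [b v] [c w]; rewrite /trivext_mul /=; congr pair; first exact: mulrA.
by rewrite !scalerDr !scalerA -!addrA [c * a]mulrC [c * b]mulrC.
Qed.

Lemma trivext_mulC : commutative trivext_mul.
Proof. by move=> [a u] [b v]; rewrite /trivext_mul /= mulrC addrC. Qed.

Lemma trivext_mul1 : left_id trivext_one trivext_mul.
Proof. by move=> [a u]; rewrite /trivext_mul /= mul1r scale1r scaler0 addr0. Qed.

Lemma trivext_mulDl : left_distributive trivext_mul +%R.
Proof.
move=> [a u] [b v] [c w]; rewrite /trivext_mul /= mulrDl scalerDl scalerDr.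
by congr pair; rewrite addrACA.
Qed.

Lemma trivext_one_neq0 : trivext_one != 0.
Proof. by apply/eqP => -[] /eqP; rewrite oner_eq0. Qed.

HB.instance Definition _ := GRing.Zmodule_isComNzRing.Build trivext
  trivext_mulA trivext_mulC trivext_mul1 trivext_mulDl trivext_one_neq0.

Definition trivext_of (v : V) : trivext := (0, v).

Lemma trivext_of0 : trivext_of 0 = 0. Proof. by []. Qed.

Lemma trivext_ofD u v : trivext_of (u + v) = trivext_of u + trivext_of v.
Proof. by congr pair; rewrite /= addr0. Qed.

Lemma trivext_ofN v : trivext_of (- v) = - trivext_of v.
Proof. by congr pair; rewrite /= oppr0. Qed.

Lemma trivext_ofMn v n : trivext_of (v *+ n) = trivext_of v *+ n.
Proof. by elim: n => // n IH; rewrite !mulrS trivext_ofD IH. Qed.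

Lemma trivext_ofZ a v : trivext_of (a *: v) = ((a, 0) : trivext) * trivext_of v.
Proof. by congr pair; rewrite /= ?mulr0 ?scaler0 ?addr0. Qed.

Lemma trivext_of_inj : injective trivext_of.
Proof. by move=> u v []. Qed.

End TrivialExtension.

Ltac lmod_ring :=
  apply: trivext_of_inj;
  rewrite ?(trivext_of0, trivext_ofD, trivext_ofN, trivext_ofMn, trivext_ofZ); ring.

Lemma mxtrace_pid (F : fieldType) n r : (r <= n)%N -> \tr (pid_mx r : 'M[F]_n) = r%:R.
Proof.
move=> le_rn; rewrite /mxtrace (eq_bigr (fun i : 'I_n => ((i < r)%N)%:R)); last first.
  by move=> i _; rewrite mxE eqxx.
rewrite -natr_sum -(big_mkord xpredT (fun i => nat_of_bool (i < r)%N)).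
rewrite (@big_cat_nat _ _ _ r 0 n _ _ (leq0n r) le_rn) /=.
rewrite [X in (X + _)%N]big_nat_cond (eq_bigr (fun=> 1%N)); last first.
  by move=> i /andP[/andP[_ ->]].
rewrite -big_nat_cond sum_nat_const_nat subn0 muln1 big_nat_cond big1 ?addn0 //.
by move=> i /andP[/andP[le_ri _] _]; rewrite ltnNge le_ri.
Qed.

Lemma mxtrace_idem (F : fieldType) n (A : 'M[F]_n) :
  A *m A = A -> \tr A = (\rank A)%:R.
Proof.
move=> idemA; have defA := mulmx_ebase A.
set L := col_ebase A in defA; set U := row_ebase A in defA.
set r := \rank A in defA *.
have pidULpid : pid_mx r *m (U *m L) *m pid_mx r = pid_mx r :> 'M_n.
  apply: (can_inj (mulKmx (col_ebase_unit A))).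
  apply: (can_inj (mulmxK (row_ebase_unit A))) => /=.
  by transitivity (A *m A); rewrite -/L -/U; [rewrite -defA !mulmxA | rewrite idemA defA].
rewrite -defA mxtrace_mulC mulmxA -(@pid_mx_id F n n n r (rank_leq_row A)) mulmxA.
by rewrite mxtrace_mulC mulmxA pidULpid mxtrace_pid // rank_leq_row.
Qed.

Section EndoTrace.
Variables (F : fieldType) (V : vectType F).
Implicit Types f g : V -> V.

Definition endo_mx f : 'M[F]_(dim V) := \matrix_i v2r (f (r2v (delta_mx 0 i))).
Definition endo_tr f := \tr (endo_mx f).

Lemma endo_mxP f : linear f -> forall v, v2r (f v) = v2r v *m endo_mx f.
Proof.
move=> f_lin v; rewrite -{1}(v2rK v) {1}(row_sum_delta (v2r v)) linear_sum lin_sum //.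
rewrite linear_sum; apply/rowP => j; rewrite !summxE mxE; apply: eq_bigr => i _.
by rewrite !linearZ /= linZ // linearZ !mxE.
Qed.

Lemma eq_endo_mx f g : f =1 g -> endo_mx f = endo_mx g.
Proof. by move=> eq_fg; apply/row_matrixP => i; rewrite !rowK eq_fg. Qed.

Lemma endo_mx_id : endo_mx id = 1%:M.
Proof. by apply/row_matrixP => i; rewrite rowK r2vK row1. Qed.

Lemma endo_mx_comp f g : linear f -> linear g ->
  endo_mx (f \o g) = endo_mx g *m endo_mx f.
Proof. by move=> f_lin g_lin; apply/row_matrixP => i; rewrite row_mul !rowK /= endo_mxP. Qed.

Lemma eq_endo_tr f g : f =1 g -> endo_tr f = endo_tr g.
Proof. by move=> /eq_endo_mx eq_fg; rewrite /endo_tr eq_fg. Qed.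

Lemma endo_mxD f g : endo_mx (fun v => f v + g v) = endo_mx f + endo_mx g.
Proof. by apply/matrixP => i j; rewrite !mxE linearD /= mxE. Qed.

Lemma endo_mxZ a f : endo_mx (fun v => a *: f v) = a *: endo_mx f.
Proof. by apply/matrixP => i j; rewrite !mxE linearZ /= mxE. Qed.

Lemma endo_trD f g : endo_tr (fun v => f v + g v) = endo_tr f + endo_tr g.
Proof. by rewrite /endo_tr endo_mxD mxtraceD. Qed.

Lemma endo_trZ a f : endo_tr (fun v => a *: f v) = a * endo_tr f.
Proof. by rewrite /endo_tr endo_mxZ mxtraceZ. Qed.

Lemma endo_tr_conj f g : linear f -> linear g -> involutive g ->
  endo_tr (g \o f \o g) = endo_tr f.
Proof.
move=> f_lin g_lin gK; have gf_lin : linear (g \o f) by move=> a u v; rewrite /= f_lin g_lin.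
rewrite /endo_tr (endo_mx_comp gf_lin g_lin) (endo_mx_comp g_lin f_lin).
rewrite mxtrace_mulC -mulmxA -(endo_mx_comp g_lin g_lin) (eq_endo_mx gK).
by rewrite endo_mx_id mulmx1.
Qed.

Lemma endo_tr_idem f : linear f -> idempotent_fun f ->
  endo_tr f = (\rank (endo_mx f))%:R.
Proof.
by move=> f_lin f_idem; rewrite /endo_tr mxtrace_idem // -endo_mx_comp // (eq_endo_mx f_idem).
Qed.

Lemma linear_inj_bij f : linear f -> injective f -> bijective f.
Proof.
move=> f_lin f_inj; have f_mxP := endo_mxP f_lin.
have unit_f : endo_mx f \in unitmx.
  rewrite -row_free_unit; apply: inj_row_free => v fv0.
  have /f_inj v0 : f (r2v v) = f 0 by apply: v2r_inj; rewrite f_mxP r2vK fv0 lin0 ?linear0.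
  by rewrite -(r2vK v) v0 linear0.
exists (fun w => r2v (v2r w *m invmx (endo_mx f))) => [v | w].
  by rewrite f_mxP mulmxK // v2rK.
by apply: v2r_inj; rewrite f_mxP r2vK mulmxKV.
Qed.

End EndoTrace.

Section EndoTraceNum.
Variables (F : numFieldType) (V : vectType F).

Lemma endo_tr_idem_ge0 (f : V -> V) : linear f -> idempotent_fun f -> 0 <= endo_tr f.
Proof. by move=> f_lin f_idem; rewrite endo_tr_idem // ler0n. Qed.

Lemma endo_tr_idem_gt0 (f : V -> V) v : linear f -> idempotent_fun f -> f v != 0 ->
  0 < endo_tr f.
Proof.
move=> f_lin f_idem; apply: contraNT; rewrite endo_tr_idem // ltr0n -leqNgt leqn0.
by rewrite mxrank_eq0 => /eqP f0; rewrite -(v2rK (f v)) endo_mxP // f0 mulmx0 linear0.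
Qed.

End EndoTraceNum.

Lemma ex_minimizer (T : Type) (size : T -> nat) (P : T -> Prop) :
  (exists x, P x) -> exists2 x, P x & forall y, P y -> (size x <= size y)%N.
Proof.
move=> [x0 Px0]; elim: {x0}(size x0) {-2}x0 (leqnn (size x0)) Px0 => [|n IHn] x le_xn Px.
  by exists x => // y _; rewrite leqn0 in le_xn; rewrite (eqP le_xn).
have [[y Py lt_yx] | no_smaller] :=
  classic (exists2 y, P y & (size y < size x)%N); last first.
  exists x => // y Py; rewrite leqNgt; apply/negP => lt_yx.
  by apply: no_smaller; exists y.
by apply: (IHn y) => //; rewrite -ltnS (leq_trans lt_yx).
Qed.

Lemma real_poly_root_or_quadratic_factor (R : rcfType) (p : {poly R}) :
  (1 < size p)%N ->
  (exists l, root p l) \/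
  exists a b, b != 0 /\ ('X - a%:P) ^+ 2 + (b ^+ 2)%:P %| p.
Proof.
move=> p_nconst; set pC := map_poly (real_complex R) p.
have [[a b] pz0] : exists z : R[i], root pC z.
  by apply/closed_rootP; rewrite size_map_poly gtn_eqF.
have [b0 | b_neq0] := eqVneq b 0.
  left; exists a; move: pz0; rewrite b0 complexr0 /root horner_map /=.
  by rewrite -(rmorph0 (real_complex R)) (inj_eq (@complexI R)).
right; exists a, b; split => //.
pose z : R[i] := Complex a b; pose zJ : R[i] := Complex a (- b).
have pzJ0 : root pC zJ.
  have -> : pC = map_poly conjc pC.
    by rewrite -map_poly_comp; apply: eq_map_poly => c; rewrite /= /conjc /= oppr0.
  by rewrite complex_root_conj /conjc /= opprK.
have uniq_zJ : uniq_roots [:: z; zJ].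
  rewrite uniq_rootsE /= inE andbT; apply/eqP => -[] /eqP.
  by rewrite -subr_eq0 opprK -mulr2n mulrn_eq0 /= (negPf b_neq0).
have roots_zJ : all (root pC) [:: z; zJ] by rewrite /= pz0 pzJ0.
have [r def_pC] := uniq_roots_prod_XsubC roots_zJ uniq_zJ.
rewrite -(dvdp_map (real_complex R)) -/pC def_pC.
suff -> : map_poly (real_complex R) (('X - a%:P) ^+ 2 + (b ^+ 2)%:P) =
  \prod_(w <- [:: z; zJ]) ('X - w%:P) by rewrite dvdp_mull.
have -> : z = real_complex R a + 'i%C * real_complex R b := complexE z.
have -> : zJ = real_complex R a - 'i%C * real_complex R b.
  by rewrite [LHS]complexE /= rmorphN mulrN.
have sqr_iC : ('i%C%:P) ^+ 2 = -1 :> {poly R[i]} by rewrite -rmorphXn sqr_i rmorphN1.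
rewrite big_cons big_cons big_nil mulr1 !(rmorphD, rmorphB, rmorphXn, rmorphN, rmorphM) /=.
rewrite map_polyX !map_polyC /=.
transitivity (('X - (real_complex R a)%:P) ^+ 2 - ('i%C%:P) ^+ 2 * (real_complex R b)%:P ^+ 2).
  by rewrite sqr_iC; ring.
by ring.
Qed.

Section LagrangePoly.
Variables (F : fieldType) (rs : seq F).
Hypothesis rs_uniq : uniq rs.

Definition lagrange_poly (l : F) : {poly F} :=
  (\prod_(k <- rs | k != l) (l - k))^-1 *: \prod_(k <- rs | k != l) ('X - k%:P).

Lemma lagrange_poly_sample l mu : l \in rs -> mu \in rs ->
  (lagrange_poly l).[mu] = (mu == l)%:R.
Proof.
move=> rs_l rs_mu; rewrite hornerZ horner_prod.
rewrite [X in _ * X](eq_bigr (fun k => mu - k)) => [|k _]; last exact: hornerXsubC.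
have [-> | mu_neq_l] := eqVneq mu l.
  rewrite mulVf // prodf_seq_neq0; apply/allP => k _; apply/implyP => k_neq_l.
  by rewrite subr_eq0 eq_sym.
rewrite -[X in _ * X]big_filter [X in _ * X](bigD1_seq mu) ?filter_uniq ?mem_filter ?mu_neq_l //=.
by rewrite subrr mul0r mulr0.
Qed.

Lemma size_lagrange_poly l : l \in rs -> (size (lagrange_poly l) <= size rs)%N.
Proof.
move=> rs_l; rewrite (leq_trans (size_scale_leq _ _)) //.
rewrite -big_filter size_prod_XsubC size_filter.
rewrite -(count_predC (pred1 l)) -[X in (X < _)%N]add0n ltn_add2r.
by rewrite -has_count has_pred1.
Qed.

End LagrangePoly.

(* [ev] abstracts the evaluation p |-> p(x) at an element x of a formally real
   power-associative algebra with product [amul]. *)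
Section FormallyRealPolyRepresentation.
Variables (R : rcfType) (A : lmodType R) (amul : A -> A -> A) (ev : {poly R} -> A).
Hypotheses (ev_lin : linear ev)
  (evM : forall p q, ev (p * q) = amul (ev p) (ev q))
  (amul0 : forall a, amul 0 a = 0)
  (amul_real : forall a b, amul a a + amul b b = 0 -> a = 0).
Implicit Types p q f g : {poly R}.

Lemma ev_mulr_eq0 p q : ev p = 0 -> ev (p * q) = 0.
Proof. by move=> evp0; rewrite evM evp0 amul0. Qed.

Lemma ev_sumsq_eq0 f g : ev (f * f + g * g) = 0 -> ev f = 0.
Proof. by rewrite linD // !evM => /amul_real. Qed.

Section MinimalAnnihilator.
Variable m : {poly R}.
Hypotheses (m_neq0 : m != 0) (ev_m : ev m = 0)
  (m_min : forall q : {poly R}, q != 0 -> ev q = 0 -> (size m <= size q)%N).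

Lemma ev_neq0_small q : q != 0 -> (size q < size m)%N -> ev q != 0.
Proof. by move=> q_neq0; apply: contraTneq => /(m_min q_neq0); rewrite leqNgt. Qed.

Lemma ev_sumsq_annihilator f g h : f * f + g * g = m * h -> ev f = 0.
Proof. by move=> def_fg; apply: (@ev_sumsq_eq0 f g); rewrite def_fg ev_mulr_eq0. Qed.

Lemma annihilator_Ndvd_sumsq a b : b != 0 -> ~~ (('X - a%:P) ^+ 2 + (b ^+ 2)%:P %| m).
Proof.
move=> b_neq0; apply/negP => /divpK def_m.
set q := _ + _ in def_m; set y := m %/ q in def_m.
have size_q : size q = 3%N.
  by rewrite size_polyDl size_exp_XsubC // (leq_ltn_trans (size_polyC_leq1 _)).
have y_neq0 : y != 0 by apply: contra_neq m_neq0 => y0; rewrite -def_m y0 mul0r.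
have /negP[] : ev y != 0.
  apply: ev_neq0_small => //; rewrite -def_m size_mul // -?size_poly_gt0 ?size_q //.
  by rewrite addn3 /= ltnS leqnSn.
have /ev_sumsq_annihilator/eqP :
    b%:P * y * (b%:P * y) + ('X - a%:P) * y * (('X - a%:P) * y) = m * y.
  by rewrite -def_m /q rmorphXn /=; ring.
by rewrite mul_polyC linZ // scaler_eq0 (negPf b_neq0).
Qed.

Lemma annihilator_Ndvd_sqr l : ~~ (('X - l%:P) ^+ 2 %| m).
Proof.
apply/negP => /divpK def_m; set t := m %/ _ in def_m.
set r := t * ('X - l%:P).
have def_m' : m = r * ('X - l%:P) by rewrite -def_m /r -mulrA.
have r_neq0 : r != 0 by apply: contra_neq m_neq0 => r0; rewrite def_m' r0 mul0r.
have /negP[] : ev r != 0.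
  by apply: ev_neq0_small; rewrite // def_m' (size_Mmonic r_neq0 (monicXsubC l)) size_XsubC addn2.
by apply/eqP/(@ev_sumsq_annihilator _ 0 t); rewrite mul0r addr0 -def_m /r; ring.
Qed.

Lemma dvd_annihilator_split p : p %| m ->
  exists2 rs, uniq rs & p = lead_coef p *: \prod_(l <- rs) ('X - l%:P).
Proof.
have dvd_m_neq0 q : q %| m -> q != 0 by apply: contraTneq => ->; rewrite dvd0p.
elim: {p}(size p) {-2}p (leqnn (size p)) => [|n IHn] p le_pn p_dvd_m.
  by move: le_pn (dvd_m_neq0 p p_dvd_m); rewrite leqn0 size_poly_eq0 => ->.
have [le_p1 | lt_1p] := leqP (size p) 1.
  exists [::] => //; rewrite big_nil.
  by rewrite [in LHS](size1_polyC le_p1) [in RHS](size1_polyC le_p1) lead_coefC alg_polyC.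
have [[l /factor_theorem[p' def_p]] | [a [b [b_neq0 q_dvd_p]]]] :=
  real_poly_root_or_quadratic_factor lt_1p; last first.
  by move: (annihilator_Ndvd_sumsq a b_neq0); rewrite (dvdp_trans q_dvd_p).
have p'_dvd_m : p' %| m by rewrite (dvdp_trans _ p_dvd_m) // def_p dvdp_mulr.
have [|rs rs_uniq def_p'] := IHn p' _ p'_dvd_m.
  move: le_pn; rewrite def_p (size_Mmonic (dvd_m_neq0 _ p'_dvd_m) (monicXsubC l)).
  by rewrite size_XsubC addn2.
exists (l :: rs); last first.
  by rewrite def_p lead_coef_Mmonic ?monicXsubC // big_cons {1}def_p' -scalerAl mulrC.
rewrite /= rs_uniq andbT; apply: contra (annihilator_Ndvd_sqr l) => rs_l.
rewrite (dvdp_trans _ p_dvd_m) // def_p expr2 dvdp_mul2r ?polyXsubC_eq0 //.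
rewrite dvdp_XsubCl def_p' rootZ ?root_prod_XsubC // lead_coef_eq0.
exact: dvd_m_neq0 p'_dvd_m.
Qed.

Lemma annihilator_spectral : exists rs (c : R -> A),
  (forall l, l \in rs -> amul (c l) (c l) = c l /\ c l != 0) /\
  forall p, ev p = \sum_(l <- rs) p.[l] *: c l.
Proof.
have [rs rs_uniq def_m] := dvd_annihilator_split (dvdpp m).
have lc_neq0 : lead_coef m != 0 by rewrite lead_coef_eq0.
have ev_vanish q : {in rs, forall mu, root q mu} -> ev q = 0.
  move=> /allP q_rs; have rs_uroots : uniq_roots rs by rewrite uniq_rootsE.
  have [r def_q] := uniq_roots_prod_XsubC q_rs rs_uroots.
  rewrite def_q mulrC -(scalerK lc_neq0 (\prod_(l <- rs) _)) -def_m -scalerAl.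
  by rewrite linZ // ev_mulr_eq0 ?scaler0.
have ev_interp p : ev p = \sum_(l <- rs) p.[l] *: ev (lagrange_poly rs l).
  apply/eqP; rewrite -subr_eq0; under eq_bigr do rewrite -(linZ ev_lin).
  rewrite -(lin_sum ev_lin) -(linB ev_lin); apply/eqP/ev_vanish => mu rs_mu.
  rewrite /root hornerD hornerN horner_sum (bigD1_seq mu) //= big_seq_cond big1 => [|l].
    by rewrite hornerZ lagrange_poly_sample // eqxx mulr1 addr0 subrr.
  rewrite hornerZ => /andP[rs_l /negPf mu_l].
  by rewrite lagrange_poly_sample // eq_sym mu_l mulr0.
exists rs, (fun l => ev (lagrange_poly rs l)); split=> // l rs_l; split.
  rewrite -evM ev_interp (bigD1_seq l) //= big_seq_cond big1 => [|mu].
    by rewrite hornerM lagrange_poly_sample // eqxx mulr1 scale1r addr0.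
  rewrite hornerM => /andP[rs_mu /negPf mu_l].
  by rewrite lagrange_poly_sample // mu_l mulr0 scale0r.
have size_m : size m = (size rs).+1 by rewrite {1}def_m size_scale // size_prod_XsubC.
apply: ev_neq0_small; last by rewrite size_m ltnS size_lagrange_poly.
by apply/eqP => /(congr1 (horner^~ l))/eqP; rewrite lagrange_poly_sample // eqxx horner0 oner_eq0.
Qed.

End MinimalAnnihilator.

Theorem formally_real_poly_spectral : (exists2 p, p != 0 & ev p = 0) ->
  exists rs (c : R -> A),
    (forall l, l \in rs -> amul (c l) (c l) = c l /\ c l != 0) /\
    forall p, ev p = \sum_(l <- rs) p.[l] *: c l.
Proof.
move=> [p p_neq0 ev_p]; have [|m [m_neq0 ev_m] m_min] :=
  @ex_minimizer _ (fun q : {poly R} => size q) (fun q => q != 0 /\ ev q = 0).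
  by exists p.
by apply: (annihilator_spectral m_neq0 ev_m) => q q_neq0 ev_q; apply: m_min.
Qed.

End FormallyRealPolyRepresentation.

Lemma lmod_mul2n_eq0 (F : numFieldType) (V : lmodType F) (v : V) : v *+ 2 = 0 -> v = 0.
Proof. by move/eqP; rewrite -scaler_nat scaler_eq0 pnatr_eq0 => /eqP. Qed.

Section JordanAlgebra.
Variables (R : realType) (V : vectType R) (mul : V -> V -> V) (one : V).
Hypotheses (jordanV : unital_jordan mul one) (realV : formally_real mul).
Local Notation "x ⊙ y" := (mul x y) (at level 40, left associativity).
Implicit Types b u v w x y z : V.

Lemma jmul_linear x : linear (mul x).
Proof. by case: jordanV => jlin _ _ _ a; apply: jlin. Qed.

Lemma jmulC : commutative mul. Proof. by case: jordanV. Qed.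
Lemma jordan_id x y : (x ⊙ y) ⊙ (x ⊙ x) = x ⊙ (y ⊙ (x ⊙ x)).
Proof. by case: jordanV. Qed.
Lemma jmul1l x : one ⊙ x = x. Proof. by case: jordanV. Qed.
Lemma jmul1r x : x ⊙ one = x. Proof. by rewrite jmulC jmul1l. Qed.

Lemma jmul0r x : x ⊙ 0 = 0. Proof. exact: lin0 (jmul_linear x). Qed.
Lemma jmulDr x : {morph mul x : y z / y + z}. Proof. exact: linD (jmul_linear x). Qed.
Lemma jmulNr x : {morph mul x : y / - y}. Proof. exact: linN (jmul_linear x). Qed.
Lemma jmulBr x : {morph mul x : y z / y - z}. Proof. exact: linB (jmul_linear x). Qed.
Lemma jmulMnr x n : {morph mul x : y / y *+ n}. Proof. exact: (linMn (jmul_linear x) n). Qed.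
Lemma jmulZr x a : {morph mul x : y / a *: y}. Proof. exact: (linZ (jmul_linear x) a). Qed.
Lemma jmul_sumr x I r (P : pred I) (F : I -> V) :
  x ⊙ (\sum_(i <- r | P i) F i) = \sum_(i <- r | P i) x ⊙ F i.
Proof. exact: (lin_sum (jmul_linear x) r P F). Qed.

Lemma jmul0l x : 0 ⊙ x = 0. Proof. by rewrite jmulC jmul0r. Qed.
Lemma jmulDl x y z : (y + z) ⊙ x = y ⊙ x + z ⊙ x. Proof. by rewrite !(jmulC _ x) jmulDr. Qed.
Lemma jmulNl x y : (- y) ⊙ x = - (y ⊙ x). Proof. by rewrite !(jmulC _ x) jmulNr. Qed.
Lemma jmulBl x y z : (y - z) ⊙ x = y ⊙ x - z ⊙ x. Proof. by rewrite !(jmulC _ x) jmulBr. Qed.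
Lemma jmulMnl x y n : (y *+ n) ⊙ x = (y ⊙ x) *+ n. Proof. by rewrite !(jmulC _ x) jmulMnr. Qed.
Lemma jmulZl x a y : (a *: y) ⊙ x = a *: (y ⊙ x). Proof. by rewrite !(jmulC _ x) jmulZr. Qed.
Lemma jmul_suml x I r (P : pred I) (F : I -> V) :
  (\sum_(i <- r | P i) F i) ⊙ x = \sum_(i <- r | P i) F i ⊙ x.
Proof. by rewrite jmulC jmul_sumr; under eq_bigr do rewrite jmulC. Qed.

Definition jmulE := (jmulDl, jmulDr, jmulBl, jmulBr, jmulNl, jmulNr, jmulZl, jmulZr,
  jmulMnl, jmulMnr, jmul0l, jmul0r).

Lemma jordan_lin x y z :
  (z ⊙ y) ⊙ (x ⊙ x) + (x ⊙ y) ⊙ (x ⊙ z) *+ 2 =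
  z ⊙ (y ⊙ (x ⊙ x)) + x ⊙ (y ⊙ (x ⊙ z)) *+ 2.
Proof.
pose J u := (u ⊙ y) ⊙ (u ⊙ u) - u ⊙ (y ⊙ (u ⊙ u)).
have J0 u : J u = 0 by rewrite /J jordan_id subrr.
apply/eqP; rewrite -subr_eq0; apply/eqP/lmod_mul2n_eq0.
transitivity (J (x + z) - J (x - z) - J z *+ 2); last by rewrite !J0 subrr mul0rn subrr.
by rewrite /J ?jmulE [z ⊙ x]jmulC; lmod_ring.
Qed.

Lemma jordan_lin2 x u y z :
  (z ⊙ y) ⊙ (x ⊙ u) + (x ⊙ y) ⊙ (u ⊙ z) + (u ⊙ y) ⊙ (x ⊙ z) =
  z ⊙ (y ⊙ (x ⊙ u)) + x ⊙ (y ⊙ (u ⊙ z)) + u ⊙ (y ⊙ (x ⊙ z)).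
Proof.
pose J v := (z ⊙ y) ⊙ (v ⊙ v) + (v ⊙ y) ⊙ (v ⊙ z) *+ 2
  - (z ⊙ (y ⊙ (v ⊙ v)) + v ⊙ (y ⊙ (v ⊙ z)) *+ 2).
have J0 v : J v = 0 by rewrite /J jordan_lin subrr.
apply/eqP; rewrite -subr_eq0; apply/eqP/lmod_mul2n_eq0.
transitivity (J (x + u) - J x - J u); last by rewrite !J0 !subrr.
by rewrite /J ?jmulE [u ⊙ x]jmulC; lmod_ring.
Qed.

Section Symmetry.
Variable s : V.
Hypothesis s_sym : symmetry mul one s.

Lemma sym_mul_mulL y z : (s ⊙ y) ⊙ (s ⊙ z) = s ⊙ (y ⊙ (s ⊙ z)).
Proof.
apply/eqP; rewrite -subr_eq0; apply/eqP/lmod_mul2n_eq0; rewrite mulrnBl.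
by have := jordan_lin s y z; rewrite s_sym !jmul1r => /addrI ->; rewrite subrr.
Qed.

Lemma symL3 z : s ⊙ (s ⊙ (s ⊙ z)) = s ⊙ z.
Proof. by rewrite -sym_mul_mulL s_sym jmul1l. Qed.

Definition sym_proj a := s ⊙ (s ⊙ a).

Lemma sym_proj_linear : linear sym_proj.
Proof. by move=> k u v; rewrite /sym_proj !jmulE. Qed.

Lemma sym_proj_id a : sym_proj (sym_proj a) = sym_proj a.
Proof. by rewrite /sym_proj symL3. Qed.

Lemma sym_proj_fixed_mulL u y : sym_proj u = u -> s ⊙ (u ⊙ y) = u ⊙ (s ⊙ y).
Proof. by move=> <-; rewrite /sym_proj [RHS]jmulC sym_mul_mulL [y ⊙ _]jmulC. Qed.

Lemma sym_proj_mul_decomp u w u' w' :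
  sym_proj u = u -> s ⊙ w = 0 -> sym_proj u' = u' -> s ⊙ w' = 0 ->
  sym_proj ((u + w) ⊙ (u' + w')) = u ⊙ u' + w ⊙ w'.
Proof.
move=> Pu sw Pu' sw'; rewrite jmulDl !jmulDr !(linD sym_proj_linear) /sym_proj.
rewrite !(sym_proj_fixed_mulL _ Pu) sw' [w ⊙ u']jmulC !(sym_proj_fixed_mulL _ Pu') sw.
rewrite -/(sym_proj u') Pu' !jmul0r !addr0 add0r.
have := jordan_lin2 s w s w'; rewrite s_sym jmul1l sw [w' ⊙ s]jmulC sw'.
by rewrite !jmul0r !add0r !addr0 => <-.
Qed.

Lemma sym_proj_mul a b :
  sym_proj (a ⊙ b) = sym_proj a ⊙ sym_proj b + (a - sym_proj a) ⊙ (b - sym_proj b).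
Proof.
have kerL v : s ⊙ (v - sym_proj v) = 0 by rewrite jmulBr symL3 subrr.
rewrite -[in LHS](subrK (sym_proj a) a) -[in LHS](subrK (sym_proj b) b).
by rewrite !(addrC (_ - _)) sym_proj_mul_decomp ?sym_proj_id ?kerL.
Qed.

Lemma Uop_linear : linear (Uop mul s).
Proof. by move=> k u v; rewrite /Uop !jmulE; lmod_ring. Qed.

Lemma UopK : involutive (Uop mul s).
Proof.
move=> a; rewrite {1}/Uop -/(sym_proj _) (linB sym_proj_linear) (linMn sym_proj_linear).
by rewrite sym_proj_id /Uop -/(sym_proj a); lmod_ring.
Qed.

Lemma Uop_mul a b : Uop mul s (a ⊙ b) = Uop mul s a ⊙ Uop mul s b.
Proof. by rewrite /Uop -!/(sym_proj _) sym_proj_mul ?jmulE; lmod_ring. Qed.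

End Symmetry.

Definition Lcommute a b := forall z, a ⊙ (b ⊙ z) = b ⊙ (a ⊙ z).

Section Powers.
Variable x : V.

Definition jpow n := iter n (mul x) one.

Lemma jpowSS n : (x ⊙ x) ⊙ jpow n = jpow n.+2.
Proof.
elim: n => [|n IHn]; first by rewrite /= !jmul1r.
by rewrite [jpow n.+1]/= jmulC jordan_id [_ ⊙ (x ⊙ x)]jmulC IHn.
Qed.

Lemma jpowSS_mul n z : jpow n.+2 ⊙ z =
  (x ⊙ x) ⊙ (jpow n ⊙ z) + jpow n.+1 ⊙ (x ⊙ z) *+ 2 - x ⊙ (jpow n ⊙ (x ⊙ z)) *+ 2.
Proof.
rewrite -jpowSS /= jmulC [(x ⊙ x) ⊙ _]jmulC.
apply: (addIr (x ⊙ (jpow n ⊙ (x ⊙ z)) *+ 2)); rewrite subrK -jordan_lin.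
by rewrite [_ ⊙ (x ⊙ x)]jmulC [z ⊙ _]jmulC.
Qed.

Lemma jpow_Lcommute n : Lcommute (jpow n) x /\ Lcommute (jpow n) (x ⊙ x).
Proof.
have x_xx : Lcommute x (x ⊙ x) by move=> z; rewrite [RHS]jmulC jordan_id [z ⊙ _]jmulC.
suff [] : (Lcommute (jpow n) x /\ Lcommute (jpow n) (x ⊙ x)) /\
          (Lcommute (jpow n.+1) x /\ Lcommute (jpow n.+1) (x ⊙ x)) by [].
elim: n => [|n [[n_x n_xx] [n1_x n1_xx]]].
  by split; split => z /=; rewrite ?jmul1r ?jmul1l // x_xx.
split=> //; split=> z; rewrite !jpowSS_mul !jmulE;
  by rewrite ?(n_x, n1_x, n_xx, n1_xx, x_xx).
Qed.

Lemma jpowD m n : jpow m ⊙ jpow n = jpow (m + n).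
Proof.
elim: n => [|n IHn]; first by rewrite jmul1r addn0.
by rewrite addnS /= (proj1 (jpow_Lcommute m)) IHn.
Qed.

Definition jpow_ev (p : {poly R}) : V := \sum_(i < size p) p`_i *: jpow i.

Lemma jpow_ev_wide (p : {poly R}) n : (size p <= n)%N -> jpow_ev p = \sum_(i < n) p`_i *: jpow i.
Proof.
move=> le_pn; rewrite /jpow_ev (big_ord_widen n (fun i => p`_i *: jpow i) le_pn).
rewrite big_mkcond; apply: eq_bigr => i _; case: ltnP => // le_p_i.
by rewrite nth_default ?scale0r.
Qed.

Lemma jpow_ev_linear : linear jpow_ev.
Proof.
move=> a p q; pose n := maxn (size p) (size q).
have le_pn : (size p <= n)%N by rewrite leq_maxl.
have le_qn : (size q <= n)%N by rewrite leq_maxr.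
have le_apq_n : (size (a *: p + q)%R <= n)%N.
  by rewrite (leq_trans (size_polyD _ _)) // geq_max (leq_trans (size_scale_leq _ _)).
rewrite !(jpow_ev_wide le_pn, jpow_ev_wide le_qn, jpow_ev_wide le_apq_n).
rewrite scaler_sumr -big_split; apply: eq_bigr => i _.
by rewrite coefD coefZ scalerDl scalerA.
Qed.

Lemma jpow_evXn n : jpow_ev 'X^n = jpow n.
Proof.
rewrite /jpow_ev size_polyXn big_ord_recr /= coefXn eqxx scale1r big1 ?add0r // => i _.
by rewrite coefXn ltn_eqF ?scale0r.
Qed.

Lemma jpow_evM (p q : {poly R}) : jpow_ev (p * q) = jpow_ev p ⊙ jpow_ev q.
Proof.
rewrite -[p]coefK -[q]coefK !poly_def mulr_suml !(lin_sum jpow_ev_linear) jmul_suml.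
apply: eq_bigr => i _; rewrite mulr_sumr !(lin_sum jpow_ev_linear) jmul_sumr.
apply: eq_bigr => j _; rewrite -scalerAl -scalerAr -exprD !(linZ jpow_ev_linear).
by rewrite !jpow_evXn jmulZl jmulZr jpowD.
Qed.

Lemma jpow_ev_annihilator : exists2 p, p != 0 & jpow_ev p = 0.
Proof.
pose M := \matrix_(i < (dim V).+1) v2r (jpow i).
have /rowV0Pn[k /sub_kermxP kM0 k_neq0] : kermx M != 0.
  by rewrite kermx_eq0; apply/eqP => rankM; have := rank_leq_col M; rewrite rankM ltnn.
exists (\poly_(i < (dim V).+1) k 0 (inord i)).
  apply: contra_neq k_neq0 => k0; apply/rowP => i; move/(congr1 (coefp i)): k0.
  by rewrite /= coef_poly ltn_ord inord_val coef0 mxE.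
rewrite (jpow_ev_wide (size_poly _ _)) -[LHS]v2rK -[RHS](linear0 (@r2v _ V)) -kM0.
rewrite mulmx_sum_row linear_sum; congr r2v; apply: eq_bigr => i _.
by rewrite coef_poly ltn_ord inord_val linearZ rowK.
Qed.

End Powers.

Lemma jmul_real a b : a ⊙ a + b ⊙ b = 0 -> a = 0.
Proof.
move=> ab0; apply: (realV (s := [:: a; b])); last exact: mem_head.
by rewrite !big_cons big_nil addr0.
Qed.

Lemma jsqr_spectral x : exists rs (c : R -> V),
  (forall l, l \in rs -> c l ⊙ c l = c l /\ c l != 0) /\
  x ⊙ x = \sum_(l <- rs) l ^+ 2 *: c l.
Proof.
have [rs [c [c_idem ev_c]]] := formally_real_poly_spectral (jpow_ev_linear x)
  (jpow_evM x) jmul0l jmul_real (jpow_ev_annihilator x).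
exists rs, c; split => //; have -> : x ⊙ x = jpow x 2 by rewrite /= jmul1r.
rewrite -jpow_evXn ev_c.
by apply: eq_bigr => l _; rewrite hornerXn.
Qed.

Definition jtr a := endo_tr (mul a).

Lemma jtrD a b : jtr (a + b) = jtr a + jtr b.
Proof. by rewrite /jtr -endo_trD; apply: eq_endo_tr => z; rewrite jmulDl. Qed.

Lemma jtrZ k a : jtr (k *: a) = k * jtr a.
Proof. by rewrite /jtr -endo_trZ; apply: eq_endo_tr => z; rewrite jmulZl. Qed.

Lemma jtr0 : jtr 0 = 0. Proof. by rewrite -(scale0r 0) jtrZ mul0r. Qed.
Lemma jtrN a : jtr (- a) = - jtr a. Proof. by rewrite -scaleN1r jtrZ mulN1r. Qed.
Lemma jtrB a b : jtr (a - b) = jtr a - jtr b. Proof. by rewrite jtrD jtrN. Qed.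
Lemma jtr_sum I r (P : pred I) (F : I -> V) :
  jtr (\sum_(i <- r | P i) F i) = \sum_(i <- r | P i) jtr (F i).
Proof. exact: (big_morph jtr jtrD jtr0). Qed.

Section Idempotent.
Variable c : V.
Hypothesis c_idem : c ⊙ c = c.

(* [idem_cubic] vanishing means L_c (2 L_c - 1) (L_c - 1) = 0, so L_c has eigenvalues
   in {0, 1/2, 1}; [peirce1] and [peirce_half] are the spectral projections. *)
Definition idem_cubic z := c ⊙ (c ⊙ (c ⊙ z)) *+ 2 - c ⊙ (c ⊙ z) *+ 3 + c ⊙ z.

Lemma idem_cubic_eq0 z : idem_cubic z = 0.
Proof.
have := jordan_lin c c z; rewrite !c_idem [z ⊙ c]jmulC [(c ⊙ z) ⊙ c]jmulC => jlin.
by rewrite /idem_cubic -(canLR (addKr (c ⊙ z)) jlin); lmod_ring.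
Qed.

Definition peirce1 z := c ⊙ (c ⊙ z) *+ 2 - c ⊙ z.
Definition peirce_half z := (c ⊙ z - c ⊙ (c ⊙ z)) *+ 4.

Lemma peirce1_linear : linear peirce1.
Proof. by move=> k u v; rewrite /peirce1 !jmulE; lmod_ring. Qed.

Lemma peirce_half_linear : linear peirce_half.
Proof. by move=> k u v; rewrite /peirce_half !jmulE; lmod_ring. Qed.

Lemma peirce1_idem : idempotent_fun peirce1.
Proof.
move=> z; transitivity (peirce1 z + idem_cubic (c ⊙ z) *+ 2 + idem_cubic z).
  by rewrite /= /peirce1 /idem_cubic !jmulE; lmod_ring.
by rewrite !idem_cubic_eq0 mul0rn !addr0.
Qed.

Lemma peirce_half_idem : idempotent_fun peirce_half.
Proof.
move=> z; transitivity (peirce_half z + idem_cubic (c ⊙ z) *+ 8 - idem_cubic z *+ 4).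
  by rewrite /= /peirce_half /idem_cubic !jmulE; lmod_ring.
by rewrite !idem_cubic_eq0 !mul0rn addr0 subr0.
Qed.

Lemma jtr_idem_gt0 : c != 0 -> 0 < jtr c.
Proof.
move=> c_neq0; have peirce_sum : endo_tr (fun z => 2%:R *: (c ⊙ z)) =
    endo_tr (fun z => 2%:R *: peirce1 z + peirce_half z).
  by apply: eq_endo_tr => z; rewrite /peirce1 /peirce_half !scaler_nat; lmod_ring.
rewrite endo_trZ endo_trD endo_trZ in peirce_sum.
have peirce1_gt0 : 0 < endo_tr peirce1.
  apply: (endo_tr_idem_gt0 (v := c) peirce1_linear peirce1_idem).
  by rewrite /peirce1 !c_idem mulr2n addrK.
have : 0 < 2%:R * jtr c.
  rewrite /jtr peirce_sum; apply: ltr_wpDr; last by rewrite mulr_gt0.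
  exact: endo_tr_idem_ge0 peirce_half_linear peirce_half_idem.
by rewrite pmulr_rgt0.
Qed.

End Idempotent.

Lemma jtr_sqr_eq0 x : jtr (x ⊙ x) = 0 -> x = 0.
Proof.
have [rs [c [c_idem def_xx]]] := jsqr_spectral x.
have jtr_c_gt0 l : l \in rs -> 0 < jtr (c l).
  by move=> /c_idem[c_l_idem]; apply: jtr_idem_gt0.
move=> jtr_xx0; apply: (@jmul_real x 0).
rewrite jmul0r addr0 def_xx big1_seq // => l /andP[_ rs_l].
suff -> : l = 0 by rewrite expr0n scale0r.
move: jtr_xx0; rewrite def_xx jtr_sum big_seq; under eq_bigr do rewrite jtrZ.
move/eqP; rewrite psumr_eq0 => [/allP/(_ l rs_l) | k rs_k]; last first.
  by rewrite mulr_ge0 ?sqr_ge0 ?ltW ?jtr_c_gt0.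
by rewrite rs_l mulf_eq0 sqrf_eq0 (gt_eqF (jtr_c_gt0 l rs_l)) orbF => /eqP.
Qed.

Lemma jtr_Uop s a : symmetry mul one s -> jtr (Uop mul s a) = jtr a.
Proof.
move=> s_sym; rewrite /jtr -(endo_tr_conj (jmul_linear a) (Uop_linear s) (UopK s_sym)).
by apply: eq_endo_tr => z /=; rewrite Uop_mul ?UopK.
Qed.

Section TraceIsometry.
Variable f : V -> V.
Hypothesis f_iso : forall a b, jtr (f a ⊙ f b) = jtr (a ⊙ b).

Lemma jtr_isometry_linear : linear f.
Proof.
(* w is trace-orthogonal to the image of f, and in particular to itself. *)
move=> k a b; apply/eqP; rewrite -subr_eq0; apply/eqP.
set w := f (k *: a + b) - (k *: f a + f b).
have w_orth c : jtr (w ⊙ f c) = 0.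
  rewrite /w !jmulE !(jtrD, jtrN, jtrZ) !f_iso jmulDl jmulZl jtrD jtrZ.
  by rewrite subrr.
apply: jtr_sqr_eq0; rewrite {1}/w jmulBl jmulDl jmulZl !(jtrB, jtrD, jtrN, jtrZ).
by rewrite ![_ ⊙ w]jmulC !w_orth mulr0 addr0 subrr.
Qed.

Lemma jtr_isometry_inj : injective f.
Proof.
move=> a b fab; apply/eqP; rewrite -subr_eq0; apply/eqP/jtr_sqr_eq0.
by rewrite -f_iso (linB jtr_isometry_linear) fab subrr jmul0r jtr0.
Qed.

End TraceIsometry.

Lemma linear_sqr_morph_mul (f : V -> V) : linear f ->
  (forall a, f (a ⊙ a) = f a ⊙ f a) -> forall a b, f (a ⊙ b) = f a ⊙ f b.
Proof.
move=> f_lin f_sqr a b; apply/eqP; rewrite -subr_eq0; apply/eqP/lmod_mul2n_eq0.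
have := f_sqr (a + b); rewrite !jmulE !(linD f_lin) !jmulE !f_sqr [b ⊙ a]jmulC [f b ⊙ f a]jmulC.
by move/eqP; rewrite -subr_eq0 => /eqP <-; lmod_ring.
Qed.

Section TwoLocal.
Variable D : V -> V.
Hypothesis D_2loc : two_local_1_automorphism mul one D.

Lemma two_local_jtr_isometry a b : jtr (D a ⊙ D b) = jtr (a ⊙ b).
Proof. by have [s [s_sym -> ->]] := D_2loc a b; rewrite -Uop_mul // jtr_Uop. Qed.

Lemma two_local_sqr a : D (a ⊙ a) = D a ⊙ D a.
Proof. by have [s [s_sym -> ->]] := D_2loc a (a ⊙ a); apply: Uop_mul. Qed.

End TwoLocal.

End JordanAlgebra.

Theorem theorem5p7 (R : realType) (V : vectType R) (mul : V -> V -> V) (one : V)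
  (hJ : unital_jordan mul one) (hfr : formally_real mul) (D : V -> V) :
  two_local_1_automorphism mul one D -> jordan_automorphism mul D.
Proof.
move=> D_2loc; have D_iso := two_local_jtr_isometry hJ D_2loc.
have D_lin : linear D := jtr_isometry_linear hJ hfr D_iso.
split.
- exact: D_lin.
- exact: linear_inj_bij D_lin (jtr_isometry_inj hJ hfr D_iso).
- exact: (linear_sqr_morph_mul hJ D_lin (two_local_sqr hJ D_2loc)).
Qed.
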